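(* Let $R$ be a ring and $S\in\max\mathrm{Den}_l(R)$. Then the ring $S^{-1}R$ is a division ring if and only if $R=S\cup\mathrm{ass}(S)$.
   Context: All rings are associative with $1$. A multiplicative subset $S$ of $R$ ($1\in S$, $0\notin S$, closed under multiplication) is a left Ore set if $Sr\cap Rs\neq\emptyset$ for all $r\in R$, $s\in S$; for it, $\mathrm{ass}(S):=\{r\in R: sr=0\text{ for some } s\in S\}$. A left Ore set $S$ is a left denominator set if $rs=0$ ($r\in R$, $s\in S$) implies $tr=0$ for some $t\in S$; $S^{-1}R$ is the left localization. $\max\mathrm{Den}_l(R)$ is the set of maximal elements, under inclusion, of the set of left denominator sets of $R$. *)

From HB Require Import structures.
From mathcomp Require Import all_boot all_algebra.
Set Implicit Arguments. Unset Strict Implicit. Unset Printing Implicit Defensive.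
Import GRing.Theory.
Local Open Scope ring_scope.

Definition mult_subset (R : pzRingType) (S : R -> Prop) : Prop :=
  S 1 /\ ~ S 0 /\ (forall a b, S a -> S b -> S (a * b)).

Definition left_ore (R : pzRingType) (S : R -> Prop) : Prop :=
  mult_subset S /\
  (forall (r s : R), S s -> exists (s' r' : R), S s' /\ s' * r = r' * s).

Definition ass (R : pzRingType) (S : R -> Prop) (r : R) : Prop :=
  exists s, S s /\ s * r = 0.

Definition left_den (R : pzRingType) (S : R -> Prop) : Prop :=
  left_ore S /\
  (forall (r s : R), S s -> r * s = 0 -> exists t, S t /\ t * r = 0).

Definition max_left_den (R : pzRingType) (S : R -> Prop) : Prop :=
  left_den S /\
  (forall T : R -> Prop, left_den T -> (forall x, S x -> T x) ->
     forall x, T x -> S x).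

(* f : R -> Q is a left localization (left ring of fractions) of R at S,
   i.e. (Q, f) is S^{-1}R up to isomorphism:
   f(S) consists of units, every element of Q is f(s)^{-1} f(r), and
   ker f = ass(S). *)
Definition is_left_localization (R Q : pzRingType) (S : R -> Prop)
    (f : {rmorphism R -> Q}) : Prop :=
  (forall s, S s -> exists u : Q, u * f s = 1 /\ f s * u = 1) /\
  (forall q : Q, exists s r, S s /\ f s * q = f r) /\
  (forall r, f r = 0 <-> ass S r).

Definition division_ring (Q : pzRingType) : Prop :=
  (1 : Q) <> 0 /\ (forall x : Q, x <> 0 -> exists y, y * x = 1 /\ x * y = 1).

From mathcomp Require Import all_boot all_algebra.
Local Open Scope ring_scope.
Import GRing.Theory.
Set Implicit Arguments. Unset Strict Implicit. Unset Printing Implicit Defensive.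

(* If S^{-1}R is a division ring, the preimage T of its units is a left
   denominator set containing S (the Ore condition for T comes from writing
   f(x) f(t)^{-1} as a left fraction), so T = S by maximality; an element of R
   outside T is killed by f, i.e. lies in ass(S).  Conversely, if
   R = S \cup ass(S), a nonzero fraction f(s)^{-1} f(r) has r in S and is
   therefore a product of units. *)

Definition invertible (Q : pzRingType) (q : Q) : Prop :=
  exists u, u * q = 1 /\ q * u = 1.

Section Invertible.
Variable Q : pzRingType.
Implicit Types x y q : Q.

Lemma invertible1 : invertible (1 : Q).
Proof. by exists 1; rewrite mulr1. Qed.

Lemma invertibleM x y : invertible x -> invertible y -> invertible (x * y).
Proof.
move=> [u [ux xu]] [v [vy yv]]; exists (v * u); split.
  by rewrite mulrA -(mulrA v) ux mulr1.
by rewrite mulrA -(mulrA x) yv mulr1.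
Qed.

Lemma invertible_mulKl x q : invertible x -> invertible (x * q) -> invertible q.
Proof.
move=> [u [ux xu]] [v [vxq xqv]]; exists (v * x); split; first by rewrite -mulrA.
have -> : q = u * (x * q) by rewrite mulrA ux mul1r.
by rewrite -mulrA (mulrA (x * q)) xqv mul1r ux.
Qed.

Lemma invertible_mulr_eq0 x y : invertible x -> x * y = 0 -> y = 0.
Proof. by move=> [u [ux _]] xy0; rewrite -[y]mul1r -ux -mulrA xy0 mulr0. Qed.

Lemma mulr_invertible_eq0 x y : invertible x -> y * x = 0 -> y = 0.
Proof. by move=> [u [_ xu]] yx0; rewrite -[y]mulr1 -xu mulrA yx0 mul0r. Qed.

Lemma invertible0 : (1 : Q) <> 0 -> ~ invertible (0 : Q).
Proof. by move=> Q10 [u [u0 _]]; apply: Q10; rewrite -u0 mulr0. Qed.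

End Invertible.

Section LeftLocalization.
Variables (R Q : pzRingType) (S : R -> Prop) (f : {rmorphism R -> Q}).
Hypothesis Hloc : is_left_localization S f.

Definition preim_invertible (r : R) : Prop := invertible (f r).

Lemma localization_invertible s : S s -> invertible (f s).
Proof. by case: Hloc => Hu _ /Hu. Qed.

Lemma localization_frac q : exists s r, S s /\ f s * q = f r.
Proof. by case: Hloc => _ [Hq _]. Qed.

Lemma localization_kerP r : f r = 0 <-> ass S r.
Proof. by case: Hloc => _ [_ Hker]. Qed.

Lemma localization_nontrivial : ~ S 0 -> (1 : Q) <> 0.
Proof.
move=> S0 Q10; have /localization_kerP [s [Ss s0]] : f 1 = 0 by rewrite rmorph1.
by apply: S0; rewrite -s0 mulr1.
Qed.

Lemma left_ore_preim_invertible x t :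
  preim_invertible t -> exists s' r', preim_invertible s' /\ s' * x = r' * t.
Proof.
move=> [w [wt tw]].
have [s [a [Ss fs_eq]]] := localization_frac (f x * w).
have /localization_kerP [s2 [Ss2 s2_0]] : f (s * x - a * t) = 0.
  by rewrite rmorphB !rmorphM -fs_eq -!mulrA wt mulr1 subrr.
exists (s2 * s), (s2 * a); split.
  by rewrite /preim_invertible rmorphM; apply: invertibleM; apply: localization_invertible.
by apply/eqP; rewrite -!mulrA -subr_eq0 -mulrBr s2_0.
Qed.

Lemma left_den_preim_invertible : (1 : Q) <> 0 -> left_den preim_invertible.
Proof.
move=> Q10; split; [split; [split; [|split]|] |].
- by rewrite /preim_invertible rmorph1; apply: invertible1.
- by rewrite /preim_invertible rmorph0; apply: invertible0.
- by move=> a b fa fb; rewrite /preim_invertible rmorphM; apply: invertibleM.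
- by move=> x t; apply: left_ore_preim_invertible.
- move=> x t ft xt0.
  have /localization_kerP [s [Ss sx0]] : f x = 0.
    by apply: mulr_invertible_eq0 ft _; rewrite -rmorphM xt0 rmorph0.
  by exists s; split => //; apply: localization_invertible.
Qed.

End LeftLocalization.

Theorem lemma3p4 (R : pzRingType) (S : R -> Prop) (HS : max_left_den S)
    (Q : pzRingType) (f : {rmorphism R -> Q})
    (Hloc : is_left_localization S f) :
  division_ring Q <-> (forall r : R, S r \/ ass S r).
Proof.
have [[[[_ [S0 _]] _] _] Smax] := HS.
split.
- move=> [Q10 Qinv] r.
  have [/(localization_kerP Hloc) ass_r | fr0] := eqVneq (f r) 0; first by right.
  left; apply: (Smax (preim_invertible f)).
  + exact: left_den_preim_invertible Hloc Q10.
  + by move=> s Ss; exact: (localization_invertible Hloc Ss).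
  + by have [u uf] := Qinv _ (elimN eqP fr0); exists u.
- move=> S_ass; split; first exact: localization_nontrivial Hloc S0.
  move=> q q0; have [s [r [Ss fs_q]]] := localization_frac Hloc q.
  have fs_inv := localization_invertible Hloc Ss.
  case: (S_ass r) => [Sr | /(localization_kerP Hloc) fr0].
  + apply: invertible_mulKl fs_inv _.
    by rewrite fs_q; exact: (localization_invertible Hloc Sr).
  + by case: q0; apply: invertible_mulr_eq0 fs_inv _; rewrite fs_q.
Qed.
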